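(* For any atomic proposition $p$, there exists an adequate $p$-removing mapping $\mathsf{re}_p:\mathcal P\times\mathcal P\to\mathcal P$.
   Context: Formulas are built from $\bot$ and atoms by $\to$ and $\Box$; sequents $\Gamma\Rightarrow\Delta$ have finite multisets of formulas on each side; $\Box\Pi$ denotes $\{\Box B:B\in\Pi\}$. The calculus $\mathsf{Grz}_\infty+\mathsf{cut}$ has initial sequents $\Gamma,p\Rightarrow p,\Delta$ ($p$ atomic), $\Gamma,\bot\Rightarrow\Delta$, and rules $(\to_L)$ from $\Gamma,B\Rightarrow\Delta$ and $\Gamma\Rightarrow A,\Delta$ infer $\Gamma,A\to B\Rightarrow\Delta$; $(\to_R)$ from $\Gamma,A\Rightarrow B,\Delta$ infer $\Gamma\Rightarrow A\to B,\Delta$; $(\mathsf{refl})$ from $\Gamma,B,\Box B\Rightarrow\Delta$ infer $\Gamma,\Box B\Rightarrow\Delta$; $(\Box)$ from left premise $\Gamma,\Box\Pi\Rightarrow A,\Delta$ and right premise $\Box\Pi\Rightarrow A$ infer $\Gamma,\Box\Pi\Rightarrow\Box A,\Delta$; $(\mathsf{cut})$ from $\Gamma\Rightarrow A,\Delta$ and $\Gamma,A\Rightarrow\Delta$ infer $\Gamma\Rightarrow\Delta$. An $\infty$-proof is a possibly infinite tree of sequents built by these rules with leaves labelled by initial sequents, in which every infinite branch passes through a right premise of $(\Box)$ infinitely often; $\mathcal P$ is the set of all $\infty$-proofs. The $n$-fragment of an $\infty$-proof is the finite tree obtained by cutting every branch at the $n$-th (from the root) right premise of $(\Box)$. Write $\pi\sim_n\tau$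 if the $n$-fragments of $\pi,\tau$ coincide, and $\pi\sim_0\tau$ always. $\mathcal P_n$ is the set of $\infty$-proofs with no application of $(\mathsf{cut})$ in their $n$-fragment, and $\mathcal P_0=\mathcal P$. A pair $(\pi,\tau)$ is a cut pair with cut formula $A$ and cut result $\Gamma\Rightarrow\Delta$ if $\pi$ is an $\infty$-proof of $\Gamma\Rightarrow\Delta,A$ and $\tau$ is an $\infty$-proof of $A,\Gamma\Rightarrow\Delta$. A mapping $\mathsf u:\mathcal P\times\mathcal P\to\mathcal P$ is $A$-removing if it is non-expansive (i.e. $\pi\sim_n\pi'$ and $\tau\sim_n\tau'$ imply $\mathsf u(\pi,\tau)\sim_n\mathsf u(\pi',\tau')$ for all $n$) and maps every cut pair with cut formula $A$ to an $\infty$-proof of its cut result. It is adequate if for every $n\in\mathbb N$, $\pi,\tau\in\mathcal P_n$ implies $\mathsf u(\pi,\tau)\in\mathcal P_n$. *)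

From HB Require Import structures.
From mathcomp Require Import all_boot.
From mathcomp Require Import finmap multiset.
From Stdlib Require Import List.

Set Implicit Arguments.
Unset Strict Implicit.
Unset Printing Implicit Defensive.

Local Open Scope mset_scope.

Inductive form : Type :=
  | Fbot : form
  | Fvar : nat -> form
  | Fimp : form -> form -> form
  | Fbox : form -> form.

Fixpoint form_enc (A : form) : GenTree.tree nat :=
  match A with
  | Fbot => GenTree.Node 0 [::]
  | Fvar p => GenTree.Leaf p
  | Fimp A B => GenTree.Node 1 [:: form_enc A; form_enc B]
  | Fbox A => GenTree.Node 2 [:: form_enc A]
  end.

Fixpoint form_dec (t : GenTree.tree nat) : option form :=
  match t with
  | GenTree.Leaf p => Some (Fvar p)
  | GenTree.Node 0 [::] => Some Fbot
  | GenTree.Node 1 [:: a; b] =>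
      match form_dec a, form_dec b with
      | Some A, Some B => Some (Fimp A B)
      | _, _ => None
      end
  | GenTree.Node 2 [:: a] =>
      match form_dec a with Some A => Some (Fbox A) | None => None end
  | _ => None
  end.

Lemma form_encK : pcancel form_enc form_dec.
Proof. by elim=> [|p|A IHA B IHB|A IHA] //=; rewrite ?IHA ?IHB. Qed.

HB.instance Definition _ := Countable.copy form (pcan_type form_encK).

Definition sequent := ({mset form} * {mset form})%type.

Definition mbox (Pi : {mset form}) : {mset form} :=
  seq_mset (map Fbox (enum_mset Pi)).

(** * Rules of Grz_infty + cut (nodes of a proof tree are labelled by the
    rule applied there; [RInit] marks a leaf labelled by an initial sequent). *)
Inductive rule : Type := RInit | RImpL | RImpR | RRefl | RBox | RCut.

Definition rule_eqb (r r' : rule) : bool :=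
  match r, r' with
  | RInit, RInit | RImpL, RImpL | RImpR, RImpR | RRefl, RRefl
  | RBox, RBox | RCut, RCut => true
  | _, _ => false
  end.

Definition step (s : sequent) (r : rule) (ps : list sequent) : Prop :=
  match r with
  | RInit => ps = nil /\
      ((exists (G D : {mset form}) (p : nat),
          s = (Fvar p +` G, Fvar p +` D)) \/
       (exists (G D : {mset form}), s = (Fbot +` G, D)))
  | RImpL => exists (G D : {mset form}) (A B : form),
      s = (Fimp A B +` G, D) /\ ps = [:: (B +` G, D); (G, A +` D)]
  | RImpR => exists (G D : {mset form}) (A B : form),
      s = (G, Fimp A B +` D) /\ ps = [:: (A +` G, B +` D)]
  | RRefl => exists (G D : {mset form}) (B : form),
      s = (Fbox B +` G, D) /\ ps = [:: (B +` (Fbox B +` G), D)]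
  | RBox => exists (G Pi D : {mset form}) (A : form),
      s = (G `+` mbox Pi, Fbox A +` D) /\
      ps = [:: (G `+` mbox Pi, A +` D); (mbox Pi, [mset A])]
  | RCut => exists (G D : {mset form}) (A : form),
      s = (G, D) /\ ps = [:: (G, A +` D); (A +` G, D)]
  end.

CoInductive tree : Type :=
  | Node : sequent -> rule -> list tree -> tree.

Definition root (t : tree) : sequent := let: Node s _ _ := t in s.
Definition rule_of (t : tree) : rule := let: Node _ r _ := t in r.
Definition children (t : tree) : list tree := let: Node _ _ ts := t in ts.

Fixpoint sub (t : tree) (a : list nat) : option tree :=
  match a with
  | nil => Some t
  | i :: a' =>
      match List.nth_error (children t) i with
      | Some t' => sub t' a'
      | None => None
      end
  end.

Definition local_ok (t : tree) : Prop :=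
  step (root t) (rule_of t) (List.map root (children t)).

Definition prefix (f : nat -> nat) (n : nat) : list nat := List.map f (List.seq 0 n).

Definition infinite_branch (t : tree) (f : nat -> nat) : Prop :=
  forall n, sub t (prefix f n) <> None.

(** The edge from position [m] to position [m+1] of branch [f] enters the
    right premise (index 1) of an application of (Box). *)
Definition right_box_premise (t : tree) (f : nat -> nat) (m : nat) : Prop :=
  (exists t', sub t (prefix f m) = Some t' /\ rule_of t' = RBox) /\ f m = 1%N.

Definition is_iproof (t : tree) : Prop :=
  (forall a t', sub t a = Some t' -> local_ok t') /\
  (forall f, infinite_branch t f ->
     forall n, exists m, (n <= m)%N /\ right_box_premise t f m).

Definition iproof : Type := {t : tree | is_iproof t}.

(** * n-fragments.  [frag k t a] describes the node at address [a] of the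
    fragment of [t] obtained by cutting every branch at the k-th right premise
    of (Box): [Some (s, Some (r, m))] for an inner node with sequent [s],
    rule [r] and [m] premises; [Some (s, None)] for a node at which the branch
    is cut (the k-th right premise of (Box) on its branch), which is kept as a
    leaf labelled by its sequent; [None] for addresses outside the fragment. *)
Fixpoint frag (k : nat) (t : tree) (a : list nat)
  : option (sequent * option (rule * nat)) :=
  match a with
  | nil =>
      Some (root t, match k with 0 => None | _ => Some (rule_of t, length (children t)) end)
  | i :: a' =>
      match k with
      | 0 => None
      | S k' =>
          match List.nth_error (children t) i with
          | None => None
          | Some t' =>
              frag (if rule_eqb (rule_of t) RBox && (i == 1)%N then k' else k) t' a'
          end
      end
  end.

Definition sim (n : nat) (pi tau : iproof) : Prop :=
  match n with
  | 0 => True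
  | _ => forall a, frag n (proj1_sig pi) a = frag n (proj1_sig tau) a
  end.

Definition in_P (n : nat) (pi : iproof) : Prop :=
  match n with
  | 0 => True
  | _ => forall a s m, frag n (proj1_sig pi) a <> Some (s, Some (RCut, m))
  end.

Definition iroot (pi : iproof) : sequent := root (proj1_sig pi).

Definition cut_pair (A : form) (G D : {mset form}) (pi tau : iproof) : Prop :=
  iroot pi = (G, A +` D) /\ iroot tau = (A +` G, D).

Definition non_expansive (u : iproof -> iproof -> iproof) : Prop :=
  forall n pi pi' tau tau', sim n pi pi' -> sim n tau tau' ->
    sim n (u pi tau) (u pi' tau').

Definition removing (A : form) (u : iproof -> iproof -> iproof) : Prop :=
  non_expansive u /\
  forall (G D : {mset form}) (pi tau : iproof),
    cut_pair A G D pi tau -> iroot (u pi tau) = (G, D).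

Definition adequate (u : iproof -> iproof -> iproof) : Prop :=
  forall n pi tau, in_P n pi -> in_P n tau -> in_P n (u pi tau).

(* Given pi proving Γ ⇒ Δ, p and tau proving p, Γ ⇒ Δ, the result is built corecursively
   along pi: every sequent of pi loses one p from its succedent, and a proof of p, Γ' ⇒ Δ' \ p
   is carried to each node Γ' ⇒ Δ' of pi.  Passing to a premise, this proof is adapted by a
   context shift (weakening, or inversion of the rule used in pi); right premises of (Box) are
   copied unchanged, as their succedent has no side formulas.  At an initial sequent whose only
   p on the right is principal, the carried proof of p, p, Γ' ⇒ Δ' is contracted on p.
   Every infinite branch of the result eventually runs into a copy of an ∞-proof, which gives
   the global condition.  Each node of the result depends only on the labels of a node of pi or
   tau and of its premises, and right (Box)-premises are never skipped or rewritten; hence the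
   construction is non-expansive and introduces no cut. *)

From mathcomp Require Import all_boot.
From mathcomp Require Import finmap multiset zify.
From Stdlib Require Import Classical ClassicalEpsilon.
From Stdlib Require List.

Set Implicit Arguments.
Unset Strict Implicit.
Unset Printing Implicit Defensive.

Local Open Scope mset_scope.

(* Stated for [{mset form}] so that [lia] meets syntactically identical multiplicity atoms,
   which the generic [msetE2] does not produce. *)
Lemma msetDE (A B : {mset form}) x : (A `+` B) x = A x + B x.
Proof. by rewrite msetE2. Qed.

Lemma msetBE (A B : {mset form}) x : (A `\` B) x = A x - B x.
Proof. by rewrite msetE2. Qed.

Lemma mset1E (a x : form) : [mset a] x = (x == a).
Proof. by rewrite msetnE; case: (x == a). Qed.

Lemma mset0xE (x : form) : (mset0 : {mset form}) x = 0.
Proof. exact: mset0E. Qed.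

Lemma msubset_count (A B : {mset form}) x : A `<=` B -> A x <= B x.
Proof. by move/msubsetP. Qed.

Definition mset_countE := (msetDE, msetBE, mset1E, mset0xE).

Ltac neq_forms :=
  repeat match goal with |- context [?a == ?b] =>
    rewrite (_ : (a == b) = false); last by apply/eqP end.

Ltac split_eqs :=
  repeat (rewrite ?eqxx; match goal with |- context [@eq_op ?T ?y ?a] =>
    is_var y; let E := fresh "E" in
    case E: (@eq_op T y a); [move/eqP: E => E; subst y|] end);
  rewrite ?eqxx.

Ltac count_lia :=
  repeat match goal with H : is_true (leq _ _) |- _ => revert H end;
  rewrite /= ?mset_countE /=; split_eqs; neq_forms; lia.

Ltac mset_lia :=
  rewrite /=; let x := fresh "x" in apply/msetP => x;
  repeat match goal with H : is_true (_ `<=` _) |- _ => move/(msubset_count x): H end;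
  count_lia.

Lemma mset1_msubset (a : form) (G : {mset form}) : 0 < G a -> [mset a] `<=` G.
Proof. by move=> pos; apply/msubsetP => x; rewrite mset1E; case: eqP => [->|]. Qed.

Lemma mbox_nonbox (Pi : {mset form}) x : (forall B, x <> Fbox B) -> mbox Pi x = 0.
Proof.
move=> nbox; rewrite /mbox mset_seqE; elim: (enum_mset Pi) => //= a s ->.
by case: eqP => // /esym /nbox.
Qed.

Definition box_right (r : rule) (i : nat) : bool := rule_eqb r RBox && (i == 1).

Definition child_level (k : nat) (t : tree) (i : nat) : nat :=
  if box_right (rule_of t) i then k else k.+1.

Definition node : Type := sequent * rule * list sequent.

Definition node_info (t : tree) : node :=
  (root t, rule_of t, List.map root (children t)).

Definition frag_agree (k : nat) (t t' : tree) : Prop := forall a, frag k t a = frag k t' a.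

Definition cut_free (k : nat) (t : tree) : Prop :=
  forall a s m, frag k t a <> Some (s, Some (RCut, m)).

Lemma frag_cons k t i a : frag k.+1 t (i :: a) =
  if List.nth_error (children t) i is Some c then frag (child_level k t i) c a else None.
Proof. by []. Qed.

Lemma frag_agree_root k t t' : frag_agree k t t' -> root t = root t'.
Proof. by move=> agree; have := agree [::]; case: k {agree} => [|k] [->]. Qed.

Lemma frag_agree_node k t t' : frag_agree k.+1 t t' ->
  [/\ root t = root t', rule_of t = rule_of t' & length (children t) = length (children t')].
Proof. by move=> agree; have := agree [::] => /= [[-> -> ->]]. Qed.

Lemma nth_error_length_None (A B : Type) (l : list A) (l' : list B) i :
  length l = length l' -> List.nth_error l i = None -> List.nth_error l' i = None.
Proof. by move=> len /List.nth_error_None; rewrite len => /List.nth_error_None. Qed.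

Lemma frag_agree_child k t t' i c : frag_agree k.+1 t t' ->
  List.nth_error (children t) i = Some c ->
  exists2 c', List.nth_error (children t') i = Some c' & frag_agree (child_level k t i) c c'.
Proof.
move=> agree ec; have [_ rule_eq len_eq] := frag_agree_node agree.
case ec': (List.nth_error (children t') i) => [c'|].
  by exists c' => // a; have := agree (i :: a); rewrite !frag_cons ec ec' /child_level rule_eq.
by move: ec; rewrite (nth_error_length_None (esym len_eq) ec').
Qed.

Lemma frag_agree_node_info k t t' : frag_agree k.+1 t t' -> node_info t = node_info t'.
Proof.
move=> agree; rewrite /node_info; have [-> -> len_eq] := frag_agree_node agree.
congr (_, _, _).
apply: List.nth_error_ext => i; rewrite !List.nth_error_map.
case ec: (List.nth_error (children t) i) => [c|].
  by have [c' -> /frag_agree_root /= ->] := frag_agree_child agree ec.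
by rewrite (nth_error_length_None len_eq ec).
Qed.

Lemma cut_free_rule k t : cut_free k.+1 t -> rule_of t <> RCut.
Proof.
by move=> cf rule_cut; apply: (cf [::] (root t) (length (children t))); rewrite /= -rule_cut.
Qed.

Lemma cut_free_child k t i c : cut_free k.+1 t -> List.nth_error (children t) i = Some c ->
  cut_free (child_level k t i) c.
Proof. by move=> cf ec a s m; have := cf (i :: a) s m; rewrite frag_cons ec. Qed.

Definition box_often (t : tree) (f : nat -> nat) : Prop :=
  forall n, exists m, n <= m /\ right_box_premise t f m.

Lemma prefixS f n : prefix f n.+1 = f 0 :: prefix (fun j => f j.+1) n.
Proof. by rewrite /prefix /= -List.seq_shift List.map_map. Qed.

Lemma prefixSr f n : prefix f n.+1 = prefix f n ++ [:: f n].
Proof. by rewrite /prefix List.seq_S List.map_app. Qed.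

Lemma sub_cat t a b : sub t (a ++ b) = if sub t a is Some c then sub c b else None.
Proof. by elim: a t => [|i a IH] t //=; case: (List.nth_error (children t) i). Qed.

Lemma iproof_child t i c : is_iproof t -> List.nth_error (children t) i = Some c -> is_iproof c.
Proof.
move=> [t_ok t_often] ec; split => [a t' sub_c|f branch n].
  by apply: (t_ok (i :: a)); rewrite /= ec.
pose g j := if j is j'.+1 then f j' else i.
have branch_g : infinite_branch t g by case=> [|m] //; rewrite prefixS /= ec; exact: branch.
have [[|m] [le_nm [[t' [sub_t' rule_t']] gm]]] := t_often g branch_g n.+1 => //.
by exists m; split => //; split => //; exists t'; move: sub_t'; rewrite prefixS /= ec.
Qed.

Lemma box_often_subtree m t f u : infinite_branch t f -> sub t (prefix f m) = Some u ->
  is_iproof u -> box_often t f.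
Proof.
elim: m t f => [|m IH] t f branch sub_u u_proof n.
  by case: sub_u u_proof => <- [_ often]; exact: often f branch n.
move: sub_u; rewrite prefixS /=; case ec: (List.nth_error (children t) (f 0)) => [c|] // sub_u.
have branch_c : infinite_branch c (fun j => f j.+1).
  by move=> j; have := branch j.+1; rewrite prefixS /= ec.
have [m' [le_nm' [[t' [sub_t' rule_t']] fm']]] := IH c _ branch_c sub_u u_proof n.
exists m'.+1; split; first exact: leq_trans le_nm' _.
by split => //; exists t'; rewrite prefixS /= ec.
Qed.

Definition map_ctx_premises (f : sequent -> sequent) (r : rule) (ps : list sequent) :=
  match ps with
  | nil => nil
  | p1 :: ps1 => f p1 ::
      match ps1 with
      | nil => nil
      | p2 :: ps2 => (if rule_eqb r RBox then p2 else f p2) :: ps2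
      end
  end.

Section Cotrans.
Variables (S : Type) (decide : S -> tree -> tree + sequent) (next : S -> tree -> nat -> S).

(* Proof trees never have more than two premises; further subtrees are kept verbatim. *)
CoFixpoint cotrans (x : S) (t : tree) : tree :=
  match decide x t with
  | inl u => u
  | inr s =>
    let: Node _ r ts := t in
    Node s r (match ts with
              | nil => nil
              | c1 :: ts1 => cotrans (next x t 0) c1 ::
                 match ts1 with
                 | nil => nil
                 | c2 :: ts2 => (if rule_eqb r RBox then c2 else cotrans (next x t 1) c2) :: ts2
                 end
              end)
  end.

Definition rewritten (t : tree) (i : nat) : bool := (i <= 1) && ~~ box_right (rule_of t) i.

Definition cotrans_child x t i c := if rewritten t i then cotrans (next x t i) c else c.

(* Inlined in the body of [cotrans], as the guard condition requires. *)
Definition cotrans_children x t :=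
  match children t with
  | nil => nil
  | c1 :: ts1 => cotrans (next x t 0) c1 ::
     match ts1 with
     | nil => nil
     | c2 :: ts2 => (if rule_eqb (rule_of t) RBox then c2 else cotrans (next x t 1) c2) :: ts2
     end
  end.

Lemma cotrans_unfold x t : cotrans x t =
  match decide x t with inl u => u | inr s => Node s (rule_of t) (cotrans_children x t) end.
Proof.
rewrite [LHS](_ : _ = let: Node s r ts := cotrans x t in Node s r ts); last by case: (cotrans x t).
by rewrite /=; case: (decide x t) => [[]|s] //; case: t.
Qed.

Lemma length_cotrans_children x t : length (cotrans_children x t) = length (children t).
Proof. by rewrite /cotrans_children; case: (children t) => [|c1 [|c2 ts]]. Qed.

Lemma nth_error_cotrans_children x t i :
  List.nth_error (cotrans_children x t) i =
  omap (cotrans_child x t i) (List.nth_error (children t) i).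
Proof.
rewrite /cotrans_children /cotrans_child /rewritten /box_right.
case: (children t) => [|c1 [|c2 ts]]; case: i => [|[|i]] //=; rewrite ?andbF ?andbT //=.
  by case: (rule_eqb _ _).
by case: (List.nth_error ts i).
Qed.

Lemma child_level_rewritten k t i : rewritten t i -> child_level k t i = k.+1.
Proof. by rewrite /rewritten /child_level => /andP [_ /negbTE ->]. Qed.

Lemma map_root_cotrans_children x t f :
  (forall i c, List.nth_error (children t) i = Some c -> rewritten t i ->
     root (cotrans (next x t i) c) = f (root c)) ->
  List.map root (cotrans_children x t) =
  map_ctx_premises f (rule_of t) (List.map root (children t)).
Proof.
rewrite /cotrans_children /rewritten /box_right.
case: (children t) => [|c1 [|c2 ts]] //= rootE; rewrite rootE ?andbF //.
by case: (rule_eqb _ _) (rootE 1 c2) => //= ->.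
Qed.

Section Correctness.
Variable Inv : S -> tree -> Prop.
Hypothesis Inv_iproof : forall x t, Inv x t -> is_iproof t.
Hypothesis decide_inl : forall x t u, Inv x t -> decide x t = inl u -> is_iproof u.
Hypothesis decide_inr : forall x t s, Inv x t -> decide x t = inr s ->
  step s (rule_of t) (List.map root (cotrans_children x t)) /\
  forall i c, List.nth_error (children t) i = Some c -> rewritten t i -> Inv (next x t i) c.

Lemma cotrans_local_ok a x t t' : Inv x t -> sub (cotrans x t) a = Some t' -> local_ok t'.
Proof.
elim: a x t => [|i a IH] x t inv; rewrite cotrans_unfold; case e: (decide x t) => [u|s].
- by move=> sub_u; exact: (decide_inl inv e).1 [::] _ sub_u.
- by move=> [<-]; exact: (decide_inr inv e).1.
- by move=> sub_u; exact: (decide_inl inv e).1 (i :: a) _ sub_u.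
rewrite /= nth_error_cotrans_children; case ec: (List.nth_error (children t) i) => [c|] //=.
rewrite /cotrans_child; case rw: (rewritten t i); first exact/IH/(decide_inr inv e).2.
by move=> sub_c; exact: (iproof_child (Inv_iproof inv) ec).1 a _ sub_c.
Qed.

Definition reaches_iproof (t : tree) (f : nat -> nat) : Prop :=
  exists m u, sub t (prefix f m) = Some u /\ is_iproof u.

Definition follows_generated x t f m : Prop :=
  exists x' c, [/\ sub t (prefix f m) = Some c, Inv x' c &
                   sub (cotrans x t) (prefix f m) = Some (cotrans x' c)].

Lemma follows_generatedS x t f m : infinite_branch (cotrans x t) f -> follows_generated x t f m ->
  reaches_iproof (cotrans x t) f \/
  follows_generated x t f m.+1 /\
  (forall c, sub t (prefix f m) = Some c -> rewritten c (f m)).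
Proof.
move=> branch [x' [c [sub_c inv sub_gen]]].
have := branch m.+1; rewrite prefixSr sub_cat sub_gen [cotrans x' c]cotrans_unfold.
case e: (decide x' c) => [u|s] _.
  by left; exists m, u; rewrite sub_gen cotrans_unfold e; split => //; exact: decide_inl inv e.
move: (branch m.+1).
rewrite prefixSr sub_cat sub_gen cotrans_unfold e /= nth_error_cotrans_children.
case ec: (List.nth_error (children c) (f m)) => [c0|] //= _.
have sub_gen0 : sub (cotrans x t) (prefix f m.+1) = Some (cotrans_child x' c (f m) c0).
  by rewrite prefixSr sub_cat sub_gen cotrans_unfold e /= nth_error_cotrans_children ec.
move: sub_gen0; rewrite /cotrans_child; case rw: (rewritten c (f m)) => sub_gen0.
  right; split; last by rewrite sub_c => _ [<-].
  exists (next x' c (f m)), c0; split => //; last exact: (decide_inr inv e).2.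
  by rewrite prefixSr sub_cat sub_c /= ec.
by left; exists m.+1, c0; split => //; exact: iproof_child (Inv_iproof inv) ec.
Qed.

Lemma cotrans_iproof x t : Inv x t -> is_iproof (cotrans x t).
Proof.
move=> inv; split=> [a t'|f branch]; first exact: cotrans_local_ok.
(* A branch staying in the rewritten part forever would be a branch of [t]; at its next right
   (Box)-premise it would enter a verbatim copy of a subtree of [t]. *)
have [[m [u [sub_u u_proof]]]|stuck] := classic (reaches_iproof (cotrans x t) f).
  exact: box_often_subtree branch sub_u u_proof.
have generated m : follows_generated x t f m.
  elim: m => [|m IH]; first by exists x, t.
  by case: (follows_generatedS branch IH) => [/stuck|[]].
have branch_t : infinite_branch t f by move=> m; have [x' [c [-> _ _]]] := generated m.
have [m [_ [[c [sub_c box]] fm]]] := (Inv_iproof inv).2 f branch_t 0.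
case: (follows_generatedS branch (generated m)) => [/stuck //|[_ /(_ c sub_c)]].
by rewrite /rewritten /box_right box fm.
Qed.
End Correctness.

Section FragAgree.
Variables (k : nat) (Rel : S -> S -> Prop).
Hypothesis decide_agree : forall x x' t t', Rel x x' -> frag_agree k.+1 t t' ->
  (exists u u', [/\ decide x t = inl u, decide x' t' = inl u' & frag_agree k.+1 u u']) \/
  (exists s, decide x t = inr s /\ decide x' t' = inr s).
Hypothesis next_agree : forall x x' t t' i, Rel x x' -> frag_agree k.+1 t t' ->
  rewritten t i -> Rel (next x t i) (next x' t' i).

Lemma cotrans_frag_agree x x' t t' : Rel x x' -> frag_agree k.+1 t t' ->
  frag_agree k.+1 (cotrans x t) (cotrans x' t').
Proof.
move=> rel agree a; elim: a x x' t t' rel agree => [|i a IH] x x' t t' rel agree;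
  rewrite [cotrans x t]cotrans_unfold [cotrans x' t']cotrans_unfold;
  have [_ rule_eq len_eq] := frag_agree_node agree;
  case: (decide_agree rel agree) => [[u [u' [-> -> //]]]|[s [-> ->]]].
  by rewrite /= rule_eq !length_cotrans_children len_eq.
rewrite !frag_cons !nth_error_cotrans_children.
case ec: (List.nth_error (children t) i) => [c|]; last by rewrite (nth_error_length_None len_eq ec).
have [c' -> agree_c] := frag_agree_child agree ec.
have rwE : rewritten t' i = rewritten t i by rewrite /rewritten rule_eq.
rewrite /= /cotrans_child rwE /child_level /= -rule_eq -/(child_level k t i).
case rw: (rewritten t i); last exact: agree_c.
rewrite (child_level_rewritten _ rw) in agree_c *.
by apply: IH agree_c; exact: next_agree.
Qed.
End FragAgree.

Section CutFree.
Variables (k : nat) (CF : S -> Prop).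
Hypothesis decide_cut_free : forall x t u, CF x -> cut_free k.+1 t -> decide x t = inl u ->
  cut_free k.+1 u.
Hypothesis next_cut_free : forall x t i, CF x -> cut_free k.+1 t -> rewritten t i ->
  CF (next x t i).

Lemma cotrans_cut_free x t : CF x -> cut_free k.+1 t -> cut_free k.+1 (cotrans x t).
Proof.
move=> cf_x cf_t a; elim: a x t cf_x cf_t => [|i a IH] x t cf_x cf_t s m;
  rewrite cotrans_unfold; case e: (decide x t) => [u|s'].
- exact: (decide_cut_free cf_x cf_t e).
- by move=> [_ rule_cut _]; exact: cut_free_rule cf_t rule_cut.
- exact: (decide_cut_free cf_x cf_t e).
rewrite frag_cons nth_error_cotrans_children.
case ec: (List.nth_error (children t) i) => [c|] //=.
rewrite /cotrans_child /child_level /= -/(child_level k t i).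
have cf_c := cut_free_child cf_t ec.
case rw: (rewritten t i); last exact: cf_c.
rewrite (child_level_rewritten _ rw) in cf_c *.
exact: IH _ _ (next_cut_free cf_x cf_t rw) cf_c s m.
Qed.
End CutFree.
End Cotrans.

Lemma iproof_step t : is_iproof t -> step (root t) (rule_of t) (List.map root (children t)).
Proof. by move=> pf; exact: pf.1 [::] t erefl. Qed.

Definition step_ctx (r : rule) (G D : {mset form}) (s : sequent) (ps : list sequent) : Prop :=
  match r with
  | RInit => ps = nil /\ ((exists q, s = (Fvar q +` G, Fvar q +` D)) \/ s = (Fbot +` G, D))
  | RImpL => exists A B, s = (Fimp A B +` G, D) /\ ps = [:: (B +` G, D); (G, A +` D)]
  | RImpR => exists A B, s = (G, Fimp A B +` D) /\ ps = [:: (A +` G, B +` D)]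
  | RRefl => exists B, s = (Fbox B +` G, D) /\ ps = [:: (B +` (Fbox B +` G), D)]
  | RBox => exists Pi A, s = (G `+` mbox Pi, Fbox A +` D) /\
             ps = [:: (G `+` mbox Pi, A +` D); (mbox Pi, [mset A])]
  | RCut => exists A, s = (G, D) /\ ps = [:: (G, A +` D); (A +` G, D)]
  end.

Lemma stepP s r ps : step s r ps <-> exists G D, step_ctx r G D s ps.
Proof.
case: r => /=; split.
- by move=> [-> [[G [D [q ->]]]|[G [D ->]]]]; exists G, D; split => //; [left; exists q|right].
- by move=> [G [D [-> [[q ->]|->]]]]; split => //; [left; exists G, D, q|right; exists G, D].
- by move=> [G [D [A [B ?]]]]; exists G, D, A, B.
- by move=> [G [D [A [B ?]]]]; exists G, D, A, B.
- by move=> [G [D [A [B ?]]]]; exists G, D, A, B.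
- by move=> [G [D [A [B ?]]]]; exists G, D, A, B.
- by move=> [G [D [B ?]]]; exists G, D, B.
- by move=> [G [D [B ?]]]; exists G, D, B.
- by move=> [G [Pi [D [A ?]]]]; exists G, D, Pi, A.
- by move=> [G [D [Pi [A ?]]]]; exists G, Pi, D, A.
- by move=> [G [D [A ?]]]; exists G, D, A.
- by move=> [G [D [A ?]]]; exists G, D, A.
Qed.

Definition shift_seq (RL AL RR AR : {mset form}) (s : sequent) : sequent :=
  (s.1 `\` RL `+` AL, s.2 `\` RR `+` AR).

Lemma step_ctx_shift (RL AL RR AR : {mset form}) r G D s ps :
  step_ctx r G D s ps -> RL `<=` G -> RR `<=` D ->
  step (shift_seq RL AL RR AR s) r (map_ctx_premises (shift_seq RL AL RR AR) r ps).
Proof.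
move=> ctx sub_RL sub_RR; apply/stepP; exists (G `\` RL `+` AL), (D `\` RR `+` AR).
rewrite /shift_seq; case: r ctx => /=.
- move=> [-> [[q ->]|->]]; split => //; [left; exists q|right]; congr (_, _); mset_lia.
- by move=> [A [B [-> ->]]]; exists A, B; split; [congr (_, _)|congr [:: (_, _); (_, _)]]; mset_lia.
- by move=> [A [B [-> ->]]]; exists A, B; split; [congr (_, _)|congr [:: (_, _)]]; mset_lia.
- by move=> [B [-> ->]]; exists B; split; [congr (_, _)|congr [:: (_, _)]]; mset_lia.
- by move=> [Pi [A [-> ->]]]; exists Pi, A; split; [congr (_, _)|congr [:: (_, _); _]]; mset_lia.
- by move=> [A [-> ->]]; exists A; split; [congr (_, _)|congr [:: (_, _); (_, _)]]; mset_lia.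
Qed.

Definition on_ctx_premises (P : sequent -> Prop) (r : rule) (ps : list sequent) : Prop :=
  forall i c, List.nth_error ps i = Some c -> ~~ box_right r i -> P c.

Lemma on_ctx_premises_nil P r : on_ctx_premises P r [::].
Proof. by case. Qed.

Lemma on_ctx_premises1 P r p : P p -> on_ctx_premises P r [:: p].
Proof. by move=> Pp [|[|i]] c //= [<-]. Qed.

Lemma on_ctx_premises2 P r p1 p2 : P p1 -> (r <> RBox -> P p2) -> on_ctx_premises P r [:: p1; p2].
Proof.
by move=> P1 P2 [|[|[|i]]] c //= [<-] // not_box; apply: P2 => r_box; rewrite r_box in not_box.
Qed.

Definition jump_safe (jump : node -> option nat) : Prop :=
  forall n j, jump n = Some j -> ~~ box_right n.1.2 j.

(* [shift] removes [RL], [RR] from and adds [AL], [AR] to the side contexts of all sequents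
   outside right (Box)-premises.  Where [jump] fires, the formula to be removed is principal and
   the node is replaced by its premise [j], which already carries the shifted sequent: this is
   how the inversion lemmas are realised. *)
Section Shift.
Variables (RL AL RR AR : {mset form}) (jump : node -> option nat).

Definition shift_decide (_ : unit) (t : tree) : tree + sequent :=
  if jump (node_info t) is Some j then inl (List.nth j (children t) t)
  else inr (shift_seq RL AL RR AR (root t)).

Definition shift : tree -> tree := cotrans shift_decide (fun _ _ _ => tt) tt.

Section Correctness.
Variable Inv : sequent -> Prop.
Hypothesis jump_premise : forall s r ps j, step s r ps -> Inv s -> jump (s, r, ps) = Some j ->
  List.nth_error ps j = Some (shift_seq RL AL RR AR s).
Hypothesis ctx_inherited : forall r G D s ps, step_ctx r G D s ps -> Inv s ->
  jump (s, r, ps) = None -> [/\ RL `<=` G, RR `<=` D & on_ctx_premises Inv r ps].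

Lemma shift_jump_child t j : is_iproof t -> Inv (root t) -> jump (node_info t) = Some j ->
  exists2 c, List.nth_error (children t) j = Some c & root c = shift_seq RL AL RR AR (root t).
Proof.
move=> pf inv e; have := jump_premise (iproof_step pf) inv e.
by rewrite List.nth_error_map; case: (List.nth_error _ j) => // c [<-]; exists c.
Qed.

Lemma shift_root t : is_iproof t -> Inv (root t) -> root (shift t) = shift_seq RL AL RR AR (root t).
Proof.
move=> pf inv; rewrite /shift cotrans_unfold /shift_decide; case e: (jump _) => [j|] //.
by have [c ec <-] := shift_jump_child pf inv e; rewrite (List.nth_error_nth _ _ _ ec).
Qed.

Lemma shift_spec t : is_iproof t -> Inv (root t) ->
  is_iproof (shift t) /\ root (shift t) = shift_seq RL AL RR AR (root t).
Proof.
move=> pf inv; split; last exact: shift_root.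
apply: (@cotrans_iproof _ _ _ (fun _ t => is_iproof t /\ Inv (root t))) => //.
- by move=> ? ? [].
- move=> x t0 u [pf0 inv0]; rewrite /shift_decide; case e: (jump _) => [j|] // [<-].
  have [c ec _] := shift_jump_child pf0 inv0 e.
  by rewrite (List.nth_error_nth _ _ _ ec); exact: iproof_child pf0 ec.
move=> x t0 s [pf0 inv0]; rewrite /shift_decide; case e: (jump _) => [//|] [<-].
have [G [D ctx]] := (stepP _ _ _).1 (iproof_step pf0).
have [sub_RL sub_RR inherited] := ctx_inherited ctx inv0 e.
have kids i c : List.nth_error (children t0) i = Some c -> rewritten t0 i ->
    is_iproof c /\ Inv (root c).
  move=> ec /andP [_ not_box]; split; first exact: iproof_child pf0 ec.
  by apply: (inherited i) not_box; rewrite List.nth_error_map ec.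
split=> //; rewrite (map_root_cotrans_children (f := shift_seq RL AL RR AR)).
  exact: step_ctx_shift ctx sub_RL sub_RR.
by move=> i c ec rw; have [pf_c inv_c] := kids i c ec rw; exact: shift_root.
Qed.
End Correctness.

Hypothesis safe : jump_safe jump.

Lemma shift_frag_agree k t t' : frag_agree k.+1 t t' -> frag_agree k.+1 (shift t) (shift t').
Proof.
apply: (@cotrans_frag_agree _ _ _ k (fun _ _ => True)) => // x x' t0 t0' _ agree.
rewrite /shift_decide -(frag_agree_node_info agree); case e: (jump _) => [j|]; last first.
  by right; exists (shift_seq RL AL RR AR (root t0)); rewrite (frag_agree_root agree).
left; do 2 eexists; split; [reflexivity|reflexivity|].
case ec: (List.nth_error (children t0) j) => [c|].
  have [c' ec' agree_c] := frag_agree_child agree ec.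
  rewrite (List.nth_error_nth _ _ _ ec) (List.nth_error_nth _ _ _ ec').
  by move: agree_c; rewrite /child_level (negbTE (safe e)).
have [_ _ len_eq] := frag_agree_node agree.
move/List.nth_error_None: (ec) => len_le.
rewrite !List.nth_overflow // -len_eq; exact/List.nth_error_None.
Qed.

Lemma shift_cut_free k t : cut_free k.+1 t -> cut_free k.+1 (shift t).
Proof.
apply: (@cotrans_cut_free _ _ _ k (fun _ => True)) => // x t0 u _ cf.
rewrite /shift_decide; case e: (jump _) => [j|] // [<-].
case ec: (List.nth_error (children t0) j) => [c|].
  rewrite (List.nth_error_nth _ _ _ ec).
  by move: (cut_free_child cf ec); rewrite /child_level (negbTE (safe e)).
by move/List.nth_error_None: ec => len_le; rewrite List.nth_overflow.
Qed.
End Shift.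

Definition impL_node (A B : form) (n : node) : Prop := n.1.2 = RImpL /\
  exists G D, n.1.1 = (Fimp A B +` G, D) /\ n.2 = [:: (B +` G, D); (G, A +` D)].
Definition impR_node (A B : form) (n : node) : Prop := n.1.2 = RImpR /\
  exists G D, n.1.1 = (G, Fimp A B +` D) /\ n.2 = [:: (A +` G, B +` D)].
Definition refl_node (B : form) (n : node) : Prop := n.1.2 = RRefl /\
  exists G D, n.1.1 = (Fbox B +` G, D) /\ n.2 = [:: (B +` (Fbox B +` G), D)].
Definition box_node (A : form) (n : node) : Prop := n.1.2 = RBox /\
  exists G Pi D, n.1.1 = (G `+` mbox Pi, Fbox A +` D) /\
    n.2 = [:: (G `+` mbox Pi, A +` D); (mbox Pi, [mset A])].
Definition cut_node (A : form) (n : node) : Prop := n.1.2 = RCut /\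
  exists G D, n.1.1 = (G, D) /\ n.2 = [:: (G, A +` D); (A +` G, D)].

Lemma impL_side A B r G D s ps : step_ctx r G D s ps -> 0 < s.1 (Fimp A B) ->
  impL_node A B (s, r, ps) \/
  0 < G (Fimp A B) /\ on_ctx_premises (fun c => 0 < c.1 (Fimp A B)) r ps.
Proof.
case: r => /=.
- by move=> [-> [[q ->]|->]] pos; right; (split; last exact: on_ctx_premises_nil); count_lia.
- move=> [A' [B' [-> ->]]].
  case: (Fimp A B =P Fimp A' B') => [[-> ->]|ne] pos; first by left; split => //; exists G, D.
  move: pos; rewrite /= ?mset_countE (introF eqP ne) => pos.
  by right; split; last apply: on_ctx_premises2 => *; count_lia.
- by move=> [A' [B' [-> ->]]] pos; right; split; last apply: on_ctx_premises1; count_lia.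
- by move=> [B' [-> ->]] pos; right; split; last apply: on_ctx_premises1; count_lia.
- move=> [Pi [A' [-> ->]]]; rewrite /= msetDE mbox_nonbox // addn0 => pos.
  by right; split; last apply: on_ctx_premises2 => // *; count_lia.
- by move=> [A' [-> ->]] pos; right; split; last apply: on_ctx_premises2 => *; count_lia.
Qed.

Lemma succedent_side X r G D s ps : step_ctx r G D s ps ->
  (forall q, X = Fvar q -> r <> RInit) -> 0 < s.2 X ->
  [\/ exists A B, X = Fimp A B /\ impR_node A B (s, r, ps),
      exists A, X = Fbox A /\ box_node A (s, r, ps)
    | 0 < D X /\ on_ctx_premises (fun c => 0 < c.2 X) r ps].
Proof.
case: r => /=.
- move=> [-> [[q ->]|->]] not_init pos; constructor 3; split; try exact: on_ctx_premises_nil.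
    case: (X =P Fvar q) => [/not_init //|ne].
    by move: pos; rewrite /= ?mset_countE (introF eqP ne).
  by move: pos.
- move=> [A [B [-> ->]]] _ pos.
  by constructor 3; split; last apply: on_ctx_premises2 => *; count_lia.
- move=> [A [B [-> ->]]] _.
  case: (X =P Fimp A B) => [->|ne] pos.
    by constructor 1; exists A, B; split => //; split => //; exists G, D.
  move: pos; rewrite /= ?mset_countE (introF eqP ne) => pos.
  by constructor 3; split; last apply: on_ctx_premises1; count_lia.
- by move=> [B [-> ->]] _ pos; constructor 3; split; last apply: on_ctx_premises1; count_lia.
- move=> [Pi [A [-> ->]]] _.
  case: (X =P Fbox A) => [->|ne] pos.
    by constructor 2; exists A; split => //; split => //; exists G, Pi, D.
  move: pos; rewrite /= ?mset_countE (introF eqP ne) => pos.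
  by constructor 3; split; last apply: on_ctx_premises2 => // *; count_lia.
- by move=> [A [-> ->]] _ pos; constructor 3; split; last apply: on_ctx_premises2 => *; count_lia.
Qed.

Lemma atom_antecedent_side p r G D s ps : step_ctx r G D s ps -> 1 < s.1 (Fvar p) ->
  0 < G (Fvar p) /\ on_ctx_premises (fun c => 1 < c.1 (Fvar p)) r ps.
Proof.
case: r => /=.
- by move=> [-> [[q ->]|->]] many; (split; last exact: on_ctx_premises_nil); count_lia.
- by move=> [A [B [-> ->]]] many; split; last apply: on_ctx_premises2 => *; count_lia.
- by move=> [A [B [-> ->]]] many; split; last apply: on_ctx_premises1; count_lia.
- by move=> [B [-> ->]] many; split; last apply: on_ctx_premises1; count_lia.
- move=> [Pi [A [-> ->]]]; rewrite /= msetDE mbox_nonbox // addn0 => many.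
  by split; last apply: on_ctx_premises2 => // *; count_lia.
- by move=> [A [-> ->]] many; split; last apply: on_ctx_premises2 => *; count_lia.
Qed.

Definition no_jump (_ : node) : option nat := None.

Definition jump_if (P : node -> Prop) (j : nat) (n : node) : option nat :=
  if excluded_middle_informative (P n) then Some j else None.

Lemma jump_ifP P j n j' : jump_if P j n = Some j' -> P n /\ j' = j.
Proof. by rewrite /jump_if; case: excluded_middle_informative => // Pn [<-]. Qed.

Lemma jump_if_None P j n : jump_if P j n = None -> ~ P n.
Proof. by rewrite /jump_if; case: excluded_middle_informative. Qed.

Lemma no_jump_safe : jump_safe no_jump.
Proof. by []. Qed.

Lemma jump_if_safe P j : (forall n, P n -> ~~ box_right n.1.2 j) -> jump_safe (jump_if P j).
Proof.
by move=> safe n j'; rewrite /jump_if; case: excluded_middle_informative => // /safe + [<-].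
Qed.

Definition weaken (AL AR : {mset form}) : tree -> tree := shift mset0 AL mset0 AR no_jump.

Definition contract_atom (p : nat) : tree -> tree :=
  shift [mset Fvar p] mset0 mset0 mset0 no_jump.

Definition inv_impL_left (A B : form) : tree -> tree :=
  shift [mset Fimp A B] [mset B] mset0 mset0 (jump_if (impL_node A B) 0).

Definition inv_impL_right (A B : form) : tree -> tree :=
  shift [mset Fimp A B] mset0 mset0 [mset A] (jump_if (impL_node A B) 1).

Definition inv_impR (A B : form) : tree -> tree :=
  shift mset0 [mset A] [mset Fimp A B] [mset B] (jump_if (impR_node A B) 0).

Definition inv_box (A : form) : tree -> tree :=
  shift mset0 mset0 [mset Fbox A] [mset A] (jump_if (box_node A) 0).

Lemma weaken_spec AL AR t : is_iproof t ->
  is_iproof (weaken AL AR t) /\ root (weaken AL AR t) = shift_seq mset0 AL mset0 AR (root t).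
Proof.
move=> pf; apply: (shift_spec (Inv := fun _ => True)) pf I => // r G D s ps _ _ _.
by rewrite !msub0set.
Qed.

Lemma contract_atom_spec p t : is_iproof t -> 1 < (root t).1 (Fvar p) ->
  is_iproof (contract_atom p t) /\
  root (contract_atom p t) = shift_seq [mset Fvar p] mset0 mset0 mset0 (root t).
Proof.
move=> pf many; apply: (shift_spec (Inv := fun s => 1 < s.1 (Fvar p))) pf many => //.
move=> r G D s ps ctx /(atom_antecedent_side ctx) [pos inherited] _.
by rewrite msub0set mset1_msubset.
Qed.

Lemma inv_impL_left_spec A B t : is_iproof t -> 0 < (root t).1 (Fimp A B) ->
  is_iproof (inv_impL_left A B t) /\
  root (inv_impL_left A B t) = shift_seq [mset Fimp A B] [mset B] mset0 mset0 (root t).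
Proof.
move=> pf pos; apply: (shift_spec (Inv := fun s => 0 < s.1 (Fimp A B))) pf pos.
  by move=> s r ps j _ _ /jump_ifP [[_ [G [D [/= -> ->]]]] ->]; congr (Some (_, _)); mset_lia.
move=> r G D s ps ctx pos' /jump_if_None not_principal; rewrite msub0set.
by case: (impL_side ctx pos') => [//|[/mset1_msubset -> inherited]].
Qed.

Lemma inv_impL_right_spec A B t : is_iproof t -> 0 < (root t).1 (Fimp A B) ->
  is_iproof (inv_impL_right A B t) /\
  root (inv_impL_right A B t) = shift_seq [mset Fimp A B] mset0 mset0 [mset A] (root t).
Proof.
move=> pf pos; apply: (shift_spec (Inv := fun s => 0 < s.1 (Fimp A B))) pf pos.
  by move=> s r ps j _ _ /jump_ifP [[_ [G [D [/= -> ->]]]] ->]; congr (Some (_, _)); mset_lia.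
move=> r G D s ps ctx pos' /jump_if_None not_principal; rewrite msub0set.
by case: (impL_side ctx pos') => [//|[/mset1_msubset -> inherited]].
Qed.

Lemma inv_impR_spec A B t : is_iproof t -> 0 < (root t).2 (Fimp A B) ->
  is_iproof (inv_impR A B t) /\
  root (inv_impR A B t) = shift_seq mset0 [mset A] [mset Fimp A B] [mset B] (root t).
Proof.
move=> pf pos; apply: (shift_spec (Inv := fun s => 0 < s.2 (Fimp A B))) pf pos.
  by move=> s r ps j _ _ /jump_ifP [[_ [G [D [/= -> ->]]]] ->]; congr (Some (_, _)); mset_lia.
move=> r G D s ps ctx pos' /jump_if_None not_principal; rewrite msub0set.
case: (succedent_side ctx _ pos') => // [[A' [B' [[<- <-] //]]]|[A' []//]|].
by case=> /mset1_msubset ->.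
Qed.

Lemma inv_box_spec A t : is_iproof t -> 0 < (root t).2 (Fbox A) ->
  is_iproof (inv_box A t) /\
  root (inv_box A t) = shift_seq mset0 mset0 [mset Fbox A] [mset A] (root t).
Proof.
move=> pf pos; apply: (shift_spec (Inv := fun s => 0 < s.2 (Fbox A))) pf pos.
  by move=> s r ps j _ _ /jump_ifP [[_ [G [Pi [D [/= -> ->]]]]] ->]; congr (Some (_, _)); mset_lia.
move=> r G D s ps ctx pos' /jump_if_None not_principal; rewrite msub0set.
case: (succedent_side ctx _ pos') => // [[A' [B' []//]]|[A' [[<-] //]]|].
by case=> /mset1_msubset ->.
Qed.

Definition impL_formulas (n : node) : form * form :=
  epsilon (inhabits (Fbot, Fbot)) (fun AB => impL_node AB.1 AB.2 n).
Definition impR_formulas (n : node) : form * form :=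
  epsilon (inhabits (Fbot, Fbot)) (fun AB => impR_node AB.1 AB.2 n).
Definition refl_formula (n : node) : form := epsilon (inhabits Fbot) (fun B => refl_node B n).
Definition box_formula (n : node) : form := epsilon (inhabits Fbot) (fun A => box_node A n).
Definition cut_formula (n : node) : form := epsilon (inhabits Fbot) (fun A => cut_node A n).

Lemma node_witness s r ps : step s r ps ->
  let n := (s, r, ps) in
  match r with
  | RInit => ps = [::]
  | RImpL => impL_node (impL_formulas n).1 (impL_formulas n).2 n
  | RImpR => impR_node (impR_formulas n).1 (impR_formulas n).2 n
  | RRefl => refl_node (refl_formula n) n
  | RBox => box_node (box_formula n) n
  | RCut => cut_node (cut_formula n) n
  end.
Proof.
move=> /stepP [G [D]]; case: r => /=.
- by case.
- move=> [A [B [-> ->]]]; apply: (epsilon_spec _ (fun AB => impL_node AB.1 AB.2 _)).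
  by exists (A, B); split => //; exists G, D.
- move=> [A [B [-> ->]]]; apply: (epsilon_spec _ (fun AB => impR_node AB.1 AB.2 _)).
  by exists (A, B); split => //; exists G, D.
- move=> [B [-> ->]].
  by apply: (epsilon_spec _ (fun B => refl_node B _)); exists B; split => //; exists G, D.
- move=> [Pi [A [-> ->]]].
  by apply: (epsilon_spec _ (fun A => box_node A _)); exists A; split => //; exists G, Pi, D.
- move=> [A [-> ->]].
  by apply: (epsilon_spec _ (fun A => cut_node A _)); exists A; split => //; exists G, D.
Qed.

Section AtomicCut.
Variable p : nat.

Definition drop_atom (s : sequent) : sequent := shift_seq mset0 mset0 [mset Fvar p] mset0 s.

Definition cut_partner (s s' : sequent) : Prop :=
  0 < s.2 (Fvar p) /\ s' = (Fvar p +` s.1, s.2 `\ Fvar p).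

Definition ac_next (tau : tree) (n : node) (i : nat) : tree :=
  match n.1.2 with
  | RInit => tau
  | RImpL => if i == 0 then inv_impL_left (impL_formulas n).1 (impL_formulas n).2 tau
             else inv_impL_right (impL_formulas n).1 (impL_formulas n).2 tau
  | RImpR => inv_impR (impR_formulas n).1 (impR_formulas n).2 tau
  | RRefl => weaken [mset refl_formula n] mset0 tau
  | RBox => inv_box (box_formula n) tau
  | RCut => if i == 0 then weaken mset0 [mset cut_formula n] tau
            else weaken [mset cut_formula n] mset0 tau
  end.

Definition ac_decide (tau pi : tree) : tree + sequent :=
  match rule_of pi with
  | RInit => if excluded_middle_informative (step (drop_atom (root pi)) RInit [::])
             then inr (drop_atom (root pi)) else inl (contract_atom p tau)
  | _ => inr (drop_atom (root pi))
  end.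

Definition atomic_cut : tree -> tree -> tree :=
  cotrans ac_decide (fun tau pi i => ac_next tau (node_info pi) i).

Definition ac_inv (tau pi : tree) : Prop :=
  [/\ is_iproof pi, is_iproof tau & cut_partner (root pi) (root tau)].

Lemma init_principal_atom s : step s RInit [::] -> 0 < s.2 (Fvar p) ->
  ~ step (drop_atom s) RInit [::] -> 0 < s.1 (Fvar p).
Proof.
move=> /stepP [G [D ctx]] pos not_init.
case: (posnP (D (Fvar p))) => [D_p|D_pos].
  by case: ctx pos D_p => _ [[q ->]|->]; count_lia.
by case: not_init; exact: step_ctx_shift ctx (msub0set _) (mset1_msubset D_pos).
Qed.

Lemma ac_decide_inr tau pi s : ac_decide tau pi = inr s -> s = drop_atom (root pi).
Proof.
rewrite /ac_decide; case: (rule_of pi) => [|||||]; try by case.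
by case: excluded_middle_informative => init [].
Qed.

Lemma ac_decide_inl tau pi u : ac_inv tau pi -> ac_decide tau pi = inl u ->
  is_iproof u /\ root u = drop_atom (root pi).
Proof.
move=> [pf_pi pf_tau [pos root_tau]]; rewrite /ac_decide.
case rule_pi: (rule_of pi) => //; case: excluded_middle_informative => // not_init [<-].
have init : step (root pi) RInit [::].
  by have := iproof_step pf_pi; rewrite rule_pi => -[_ init].
have many : 1 < (root tau).1 (Fvar p).
  by rewrite root_tau; move: (init_principal_atom init pos not_init); count_lia.
have [pf_u ->] := contract_atom_spec pf_tau many.
by split => //; rewrite root_tau /drop_atom /shift_seq; congr (_, _); mset_lia.
Qed.

Lemma atomic_cut_root tau pi : ac_inv tau pi -> root (atomic_cut tau pi) = drop_atom (root pi).
Proof.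
move=> inv; rewrite /atomic_cut cotrans_unfold; case e: (ac_decide tau pi) => [u|s].
  exact: (ac_decide_inl inv e).2.
by rewrite (ac_decide_inr e).
Qed.

Lemma ac_next_inv tau pi i c : ac_inv tau pi -> List.nth_error (children pi) i = Some c ->
  rewritten pi i -> ac_inv (ac_next tau (node_info pi) i) c.
Proof.
move=> [pf_pi pf_tau [pos root_tau]] ec.
have pf_c := iproof_child pf_pi ec.
have root_c : List.nth_error (List.map root (children pi)) i = Some (root c).
  by rewrite List.nth_error_map ec.
clear ec; move: (node_witness (iproof_step pf_pi)) root_tau.
rewrite /rewritten /box_right /ac_inv /cut_partner /ac_next /node_info.
case: (rule_of pi); cbn [fst snd rule_eqb].
- by move=> nil; rewrite nil in root_c; case: i root_c.
- case: (impL_formulas _) => A B [_ [G [D [root_pi kids]]]] root_tau.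
  rewrite /= in root_pi kids; rewrite kids in root_c; rewrite root_pi /= in pos root_tau.
  have pos_tau : 0 < (root tau).1 (Fimp A B) by rewrite root_tau; count_lia.
  case: i root_c => [|[|//]] [<-] _.
    have [pf' ->] := inv_impL_left_spec pf_tau pos_tau.
    by split => //; split; [count_lia|rewrite root_tau /shift_seq; congr (_, _); mset_lia].
  have [pf' ->] := inv_impL_right_spec pf_tau pos_tau.
  by split => //; split; [count_lia|rewrite root_tau /shift_seq; congr (_, _); mset_lia].
- case: (impR_formulas _) => A B [_ [G [D [root_pi kids]]]] root_tau.
  rewrite /= in root_pi kids; rewrite kids in root_c; rewrite root_pi /= in pos root_tau.
  have [pf' ->] := @inv_impR_spec A B tau pf_tau (ltac:(rewrite root_tau; count_lia)).
  case: (List.nth_error_In _ _ root_c) => [<-|[]] _.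
  by split => //; split; [count_lia|rewrite root_tau /shift_seq; congr (_, _); mset_lia].
- move: (refl_formula _) => B [_ [G [D [root_pi kids]]]] root_tau.
  rewrite /= in root_pi kids; rewrite kids in root_c; rewrite root_pi /= in pos root_tau.
  have [pf' ->] := weaken_spec [mset B] mset0 pf_tau.
  case: (List.nth_error_In _ _ root_c) => [<-|[]] _.
  by split => //; split; [count_lia|rewrite root_tau /shift_seq; congr (_, _); mset_lia].
- move: (box_formula _) => A [_ [G [Pi [D [root_pi kids]]]]] root_tau.
  rewrite /= in root_pi kids; rewrite kids in root_c; rewrite root_pi /= in pos root_tau.
  have [pf' ->] := @inv_box_spec A tau pf_tau (ltac:(rewrite root_tau; count_lia)).
  case: i root_c => [|[|//]] [<-] // _.
  by split => //; split; [count_lia|rewrite root_tau /shift_seq; congr (_, _); mset_lia].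
- move: (cut_formula _) => A [_ [G [D [root_pi kids]]]] root_tau.
  rewrite /= in root_pi kids; rewrite kids in root_c; rewrite root_pi /= in pos root_tau.
  case: i root_c => [|[|//]] [<-] _.
    have [pf' ->] := weaken_spec mset0 [mset A] pf_tau.
    by split => //; split; [count_lia|rewrite root_tau /shift_seq; congr (_, _); mset_lia].
  have [pf' ->] := weaken_spec [mset A] mset0 pf_tau.
  by split => //; split; [count_lia|rewrite root_tau /shift_seq; congr (_, _); mset_lia].
Qed.
Lemma drop_atom_step r G D s ps : step_ctx r G D s ps -> r <> RInit -> 0 < s.2 (Fvar p) ->
  step (drop_atom s) r (map_ctx_premises drop_atom r ps).
Proof.
move=> ctx not_init pos.
case: (succedent_side ctx (fun _ _ => not_init) pos) => [[? [? [//]]]|[? [//]]|[D_p _]].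
exact: step_ctx_shift ctx (msub0set _) (mset1_msubset D_p).
Qed.

Lemma ac_step tau pi s : ac_inv tau pi -> ac_decide tau pi = inr s ->
  step s (rule_of pi) (List.map root
    (cotrans_children ac_decide (fun tau pi i => ac_next tau (node_info pi) i) tau pi)).
Proof.
move=> inv e; have [pf_pi _ [pos _]] := inv.
rewrite (ac_decide_inr e) (map_root_cotrans_children (f := drop_atom)); last first.
  by move=> i c ec rw; exact: atomic_cut_root (ac_next_inv inv ec rw).
have [G [D ctx]] := (stepP _ _ _).1 (iproof_step pf_pi).
have [init|not_init] : rule_of pi = RInit \/ rule_of pi <> RInit.
  by case: (rule_of pi); [left|right..].
  move: e ctx; rewrite /ac_decide init; case: excluded_middle_informative => // drop_init _.
  by case=> ->.
exact: drop_atom_step ctx not_init pos.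
Qed.

Lemma atomic_cut_iproof tau pi : ac_inv tau pi -> is_iproof (atomic_cut tau pi).
Proof.
move=> inv; apply: (cotrans_iproof (Inv := ac_inv)) inv.
- by move=> ? ? [].
- by move=> tau' pi' u inv' e; exact: (ac_decide_inl inv' e).1.
by move=> tau' pi' s inv' e; split; [exact: ac_step|move=> i c; exact: ac_next_inv].
Qed.

Lemma ac_next_frag_agree k n i tau tau' : frag_agree k.+1 tau tau' ->
  frag_agree k.+1 (ac_next tau n i) (ac_next tau' n i).
Proof.
move=> agree; rewrite /ac_next; case: n.1.2 => //; try case: (i == 0);
  apply: shift_frag_agree agree;
  first [exact: no_jump_safe | by apply: jump_if_safe => n' [-> _]].
Qed.

Lemma ac_next_cut_free k n i tau : cut_free k.+1 tau -> cut_free k.+1 (ac_next tau n i).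
Proof.
move=> cf; rewrite /ac_next; case: n.1.2 => //; try case: (i == 0);
  apply: shift_cut_free cf;
  first [exact: no_jump_safe | by apply: jump_if_safe => n' [-> _]].
Qed.

Lemma atomic_cut_frag_agree k tau tau' pi pi' :
  frag_agree k.+1 tau tau' -> frag_agree k.+1 pi pi' ->
  frag_agree k.+1 (atomic_cut tau pi) (atomic_cut tau' pi').
Proof.
apply: (cotrans_frag_agree (Rel := frag_agree k.+1)).
  move=> x x' t t' agree_x agree_t.
  have [root_eq rule_eq _] := frag_agree_node agree_t.
  rewrite /ac_decide -rule_eq -root_eq; case: (rule_of t); try by right; eexists.
  case: excluded_middle_informative => init; [by right; eexists|left; do 2 eexists; split => //].
  exact: shift_frag_agree no_jump_safe _ _ _ agree_x.
move=> x x' t t' i agree_x agree_t _.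
by rewrite (frag_agree_node_info agree_t); exact: ac_next_frag_agree.
Qed.

Lemma atomic_cut_cut_free k tau pi : cut_free k.+1 tau -> cut_free k.+1 pi ->
  cut_free k.+1 (atomic_cut tau pi).
Proof.
apply: (cotrans_cut_free (CF := cut_free k.+1)) => [x t u cf_x _|x t i cf_x _ _].
  rewrite /ac_decide; case: (rule_of t) => //; case: excluded_middle_informative => // init [<-].
  exact: shift_cut_free no_jump_safe _ _ _.
exact: ac_next_cut_free.
Qed.
End AtomicCut.

(* On pairs that are not cut pairs on [p] the value is irrelevant; [pi] keeps both properties
   trivial there. *)
Definition remove_atomic_cut (p : nat) (pi tau : iproof) : iproof :=
  match excluded_middle_informative (cut_partner p (iroot pi) (iroot tau)) with
  | left partner => exist _ (atomic_cut p (proj1_sig tau) (proj1_sig pi))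
                      (atomic_cut_iproof (And3 (proj2_sig pi) (proj2_sig tau) partner))
  | right _ => pi
  end.

Lemma remove_atomic_cut_non_expansive p : non_expansive (remove_atomic_cut p).
Proof.
move=> [//|k] pi pi' tau tau' agree_pi agree_tau.
have partner_iff : cut_partner p (iroot pi) (iroot tau) <-> cut_partner p (iroot pi') (iroot tau').
  by rewrite /iroot (frag_agree_root agree_pi) (frag_agree_root agree_tau).
rewrite /remove_atomic_cut.
case: excluded_middle_informative => partner; case: excluded_middle_informative => partner' //=.
- exact: atomic_cut_frag_agree.
- by case: partner'; apply/partner_iff.
- by case: partner; apply/partner_iff.
Qed.

Lemma remove_atomic_cut_root p G D pi tau : cut_pair (Fvar p) G D pi tau ->
  iroot (remove_atomic_cut p pi tau) = (G, D).
Proof.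
move=> [root_pi root_tau]; rewrite /remove_atomic_cut.
case: excluded_middle_informative => [partner|]; last first.
  by case; rewrite root_pi root_tau /cut_partner; split; [count_lia|rewrite msetD1K].
change (root (atomic_cut p (proj1_sig tau) (proj1_sig pi)) = (G, D)).
rewrite atomic_cut_root; last exact: And3 (proj2_sig pi) (proj2_sig tau) partner.
by rewrite -/(iroot pi) root_pi /drop_atom /shift_seq; congr (_, _); mset_lia.
Qed.

Lemma remove_atomic_cut_adequate p : adequate (remove_atomic_cut p).
Proof.
move=> [//|k] pi tau cf_pi cf_tau; rewrite /remove_atomic_cut.
by case: excluded_middle_informative => partner //=; exact: atomic_cut_cut_free.
Qed.

Theorem lemma6p2 : forall p : nat,
  exists re_p : iproof -> iproof -> iproof, removing (Fvar p) re_p /\ adequate re_p.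
Proof.
move=> p; exists (remove_atomic_cut p); split; last exact: remove_atomic_cut_adequate.
split; first exact: remove_atomic_cut_non_expansive.
exact: remove_atomic_cut_root.
Qed.
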